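(* Let $E$ be the $k$-algebra generated by $t,w$ with relations $t^2=-t$ and $w^2=1$. Then the $k$-algebra homomorphism $E\to M_2(k[X])$ given by $$w\mapsto\begin{pmatrix}X&X^2-1\\-1&-X\end{pmatrix},\qquad t\mapsto\begin{pmatrix}0&0\\0&-1\end{pmatrix}$$ is injective, and it maps the centre $Z(E)$ isomorphically onto the scalar matrices $k[X]\cdot\mathrm{Id}$; in particular $Z(E)\cong k[X]$.
   Context: $k=\overline{\mathbb F}_p$. For a non-regular character $\xi$ of the finite torus $T(\mathbb F_q)$ of $\mathrm{PGL}_2$ (i.e. $\xi(\mathrm{diag}(a,b))=\xi(\mathrm{diag}(b,a))$), the block $e_\xi\mathcal H_{\mathrm{PGL}_2}$ of the pro-$p$ Iwahori–Hecke algebra of $\mathrm{PGL}_2(\mathfrak F)$ is isomorphic to $E$ via $t=e_\xi T_{s_0}$, $w=e_\xi T_\omega$, where $\omega$ is the image of $\begin{psmallmatrix}0&\varpi\\1&0\end{psmallmatrix}$ and $s_0=\begin{psmallmatrix}0&1\\1&0\end{psmallmatrix}$; a $k$-basis of $E$ is $1$, $(wt)^n$, $(tw)^n$, $w(tw)^{n-1}$, $t(wt)^{n-1}$ ($n\ge1$). *)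

From HB Require Import structures.
From mathcomp Require Import all_boot all_order all_algebra.
Set Implicit Arguments. Unset Strict Implicit. Unset Printing Implicit Defensive.
Import GRing.Theory.
Local Open Scope ring_scope.

(* A word is a sequence of letters; [true] stands for t, [false] for w.
   An element of the free algebra is represented by a formal finite sum
   of (coefficient, word) pairs; two formal sums denote the same element
   iff their coefficient functions [fa_coef] agree. *)
Definition word := seq bool.
Definition lt : word := [:: true].
Definition lw : word := [:: false].

Section FreeAlg.
Variable k : fieldType.

Definition fa := seq (k * word).

Definition fa_coef (x : fa) (u : word) : k :=
  \sum_(p <- x | p.2 == u) p.1.

Definition fa_opp (x : fa) : fa := [seq (- p.1, p.2) | p <- x].
Definition fa_sub (x y : fa) : fa := x ++ fa_opp y.
Definition fa_mul (x y : fa) : fa :=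
  [seq (a.1 * b.1, a.2 ++ b.2) | a <- x, b <- y].

(* u * r * v scaled by c, with r the relator t^2 + t (b = true)
   or w^2 - 1 (b = false). *)
Definition relator_term (q : k * word * bool * word) : fa :=
  let: (c, u, b, v) := q in
  if b then [:: (c, u ++ [:: true; true] ++ v); (c, u ++ [:: true] ++ v)]
  else [:: (c, u ++ [:: false; false] ++ v); (- c, u ++ v)].

Definition in_rel_ideal (x : fa) : Prop :=
  exists s : seq (k * word * bool * word),
    forall z, fa_coef x z = fa_coef (flatten (map relator_term s)) z.

(* equality in E = k<t,w> / I *)
Definition E_eq (x y : fa) : Prop := in_rel_ideal (fa_sub x y).

Definition E_central (x : fa) : Prop := forall y, E_eq (fa_mul x y) (fa_mul y x).

Definition Wmat : 'M[{poly k}]_2 :=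
  \matrix_(i < 2, j < 2)
    if (val i == 0%N) && (val j == 0%N) then 'X
    else if (val i == 0%N) then 'X ^+ 2 - 1
    else if (val j == 0%N) then -1
    else - 'X.

Definition Tmat : 'M[{poly k}]_2 :=
  \matrix_(i < 2, j < 2) if (val i == 1%N) && (val j == 1%N) then -1 else 0.

Definition phi_word (u : word) : 'M[{poly k}]_2 :=
  \prod_(b <- u) (if b then Tmat else Wmat).

Definition phi (x : fa) : 'M[{poly k}]_2 :=
  \sum_(p <- x) (p.1%:P)%:M * phi_word p.2.

End FreeAlg.

(* Modulo the relations, zeta = w + wt + tw is central, and left multiplication by
   t or by w maps combinations a1(zeta) + a2(zeta) t + a3(zeta) tw + a4(zeta) wt with
   polynomial coefficients to combinations of the same shape; so these combinations
   exhaust E.  Since phi zeta = X and the images 1, T, TW, WT of the four basis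
   elements are k[X]-independent, phi is injective.  A matrix commuting with T and W
   is scalar, so phi maps Z(E) into k[X].Id; conversely q(zeta) is central, since
   phi (q(zeta)) = q(X).Id is central and phi is injective. *)

From HB Require Import structures.
From mathcomp Require Import all_boot all_order all_algebra.
From mathcomp Require Import ring.
Import GRing.Theory.
Local Open Scope ring_scope.
Set Implicit Arguments. Unset Strict Implicit. Unset Printing Implicit Defensive.

Local Notation i0 := (ord0 : 'I_2).
Local Notation i1 := (lift ord0 ord0 : 'I_2).

Lemma mulmx2E (R : pzRingType) (A B : 'M[R]_2) i j :
  (A *m B) i j = A i i0 * B i0 j + A i i1 * B i1 j.
Proof. by rewrite mxE !big_ord_recl big_ord0 addr0. Qed.

Lemma ord2P (i : 'I_2) : i = i0 \/ i = i1.
Proof. by case: i => [[|[|//]] ?]; [left|right]; apply: val_inj. Qed.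

Section FreeAlgebra.
Variable k : fieldType.
Local Notation fa := (fa k).
Local Notation coef := (@fa_coef k).
Local Notation M2 := 'M[{poly k}]_2.
Local Notation pw := (@phi_word k).
Local Notation sc c := ((c%:P)%:M : M2).
Implicit Types (x y e g : fa) (u v z : word) (p q : {poly k}) (r : k * word * bool * word).

Definition fa_scale (c : k) x : fa := [seq (c * a.1, a.2) | a <- x].

Lemma fa_coefE x z : coef x z = \sum_(a <- x) (if a.2 == z then a.1 else 0).
Proof. by rewrite /fa_coef big_mkcond. Qed.

Lemma fa_coef_nil z : coef [::] z = 0.
Proof. by rewrite fa_coefE big_nil. Qed.

Lemma fa_coef_cons a x z : coef (a :: x) z = (if a.2 == z then a.1 else 0) + coef x z.
Proof. by rewrite !fa_coefE big_cons. Qed.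

Lemma fa_coef_cat x y z : coef (x ++ y) z = coef x z + coef y z.
Proof. by rewrite !fa_coefE big_cat. Qed.

Lemma fa_coef_opp x z : coef (fa_opp x) z = - coef x z.
Proof.
rewrite !fa_coefE big_map -sumrN; apply: eq_bigr => p _ /=.
by case: ifP; rewrite ?oppr0.
Qed.

Lemma fa_coef_scale c x z : coef (fa_scale c x) z = c * coef x z.
Proof.
rewrite !fa_coefE big_map mulr_sumr; apply: eq_bigr => p _ /=.
by case: ifP; rewrite ?mulr0.
Qed.

Lemma fa_coef_flatten (T : Type) (f : T -> fa) s z :
  coef (flatten (map f s)) z = \sum_(i <- s) coef (f i) z.
Proof. by elim: s => [|a s IH] /=; rewrite ?big_nil ?fa_coef_nil // big_cons fa_coef_cat IH. Qed.

(* Only the cut of [z] at position [size u] can contribute. *)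
Lemma sum_cut_word u v (cu cv : k) z :
  \sum_(i < (size z).+1) (if u == take i z then cu else 0) * (if v == drop i z then cv else 0)
  = if u ++ v == z then cu * cv else 0.
Proof.
case: eqP => [<-|neq_uv_z].
  have lt_u : (size u < (size (u ++ v)).+1)%N by rewrite ltnS size_cat leq_addr.
  rewrite (bigD1 (Ordinal lt_u)) //= take_size_cat // drop_size_cat // !eqxx big1 ?addr0 //.
  move=> i ne_i; case: eqP => [u_take|]; last by rewrite mul0r.
  move: ne_i; rewrite -val_eqE /=; have := congr1 size u_take.
  by rewrite size_takel => [->|]; rewrite ?eqxx // -ltnS ltn_ord.
apply: big1 => i _; case: eqP => [u_take|]; last by rewrite mul0r.
case: eqP => [v_drop|]; last by rewrite mulr0.
by case: neq_uv_z; rewrite u_take v_drop cat_take_drop.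
Qed.

Lemma fa_coef_mul x y z :
  coef (fa_mul x y) z = \sum_(i < (size z).+1) coef x (take i z) * coef y (drop i z).
Proof.
rewrite fa_coefE /fa_mul big_allpairs_dep /=; symmetry.
under eq_bigr => i _ do rewrite !fa_coefE big_distrl /=.
rewrite exchange_big /=; apply: eq_bigr => a _.
under eq_bigr => i _ do rewrite big_distrr /=.
by rewrite exchange_big /=; apply: eq_bigr => b _; rewrite sum_cut_word.
Qed.

Lemma fa_mul_coef_eq x x' y y' :
  coef x =1 coef x' -> coef y =1 coef y' -> coef (fa_mul x y) =1 coef (fa_mul x' y').
Proof. by move=> ex ey z; rewrite !fa_coef_mul; apply: eq_bigr => i _; rewrite ex ey. Qed.

Lemma fa_mul_catl x1 x2 y : fa_mul (x1 ++ x2) y = fa_mul x1 y ++ fa_mul x2 y.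
Proof. exact: allpairs_cat. Qed.

Lemma fa_mul_catr x y1 y2 : coef (fa_mul x (y1 ++ y2)) =1 coef (fa_mul x y1 ++ fa_mul x y2).
Proof.
move=> z; rewrite fa_coef_cat !fa_coef_mul -big_split; apply: eq_bigr => i _ /=.
by rewrite fa_coef_cat mulrDr.
Qed.

Lemma fa_mulr0 x : coef (fa_mul x [::]) =1 coef [::].
Proof. by move=> z; rewrite fa_coef_mul fa_coef_nil big1 // => i _; rewrite fa_coef_nil mulr0. Qed.

Lemma fa_mulrN x y : coef (fa_mul x (fa_opp y)) =1 coef (fa_opp (fa_mul x y)).
Proof.
move=> z; rewrite fa_coef_opp !fa_coef_mul -sumrN.
by apply: eq_bigr => i _; rewrite fa_coef_opp mulrN.
Qed.

Lemma fa_mulrZ c x y : coef (fa_mul x (fa_scale c y)) =1 coef (fa_scale c (fa_mul x y)).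
Proof.
move=> z; rewrite fa_coef_scale !fa_coef_mul mulr_sumr.
by apply: eq_bigr => i _; rewrite fa_coef_scale mulrCA.
Qed.

Lemma fa_mul_cons a x y :
  fa_mul (a :: x) y = [seq (a.1 * b.1, a.2 ++ b.2) | b <- y] ++ fa_mul x y.
Proof. by []. Qed.

Lemma fa_mulA x y e : fa_mul (fa_mul x y) e = fa_mul x (fa_mul y e).
Proof.
elim: x => [|a x IH] //; rewrite !fa_mul_cons fa_mul_catl IH; congr (_ ++ _); clear IH.
elim: y => [|b y IHy] //; rewrite /= !fa_mul_cons IHy map_cat -map_comp.
by congr (_ ++ _); apply: eq_map => c /=; rewrite mulrA catA.
Qed.

(** * The relation ideal and the quotient E *)

Local Notation I := (@in_rel_ideal k).

Lemma rel_ideal_coef_eq x y : coef x =1 coef y -> I x -> I y.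
Proof. by move=> exy [s hs]; exists s => z; rewrite -exy. Qed.

Lemma rel_ideal0 x : coef x =1 coef [::] -> I x.
Proof. by move=> ex; exists [::] => z; rewrite ex. Qed.

Lemma rel_ideal_cat x y : I x -> I y -> I (x ++ y).
Proof.
move=> [s1 h1] [s2 h2]; exists (s1 ++ s2) => z.
by rewrite fa_coef_cat h1 h2 map_cat flatten_cat fa_coef_cat.
Qed.

Lemma rel_ideal_scale c x : I x -> I (fa_scale c x).
Proof.
move=> [s hs]; exists [seq let: (c', u, b, v) := r in (c * c', u, b, v) | r <- s] => z.
rewrite fa_coef_scale hs !fa_coef_flatten big_map mulr_sumr.
apply: eq_bigr => -[[[c' u] b] v] _; case: b; rewrite /= !fa_coef_cons fa_coef_nil /=;
  by case: ifP => _; case: ifP => _; ring.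
Qed.

Lemma rel_ideal_opp x : I x -> I (fa_opp x).
Proof.
move=> Ix; apply: rel_ideal_coef_eq (rel_ideal_scale (-1) Ix) => z.
by rewrite fa_coef_scale fa_coef_opp mulN1r.
Qed.

Lemma rel_ideal_relator_mul r y : I (fa_mul (relator_term r) y).
Proof.
case: r => [[[c u] b] v]; elim: y => [|[c' v'] y IH]; first exact: rel_ideal0 (fa_mulr0 _).
apply: rel_ideal_coef_eq (fsym (fa_mul_catr _ [:: (c', v')] y)) _.
apply: rel_ideal_cat => //; exists [:: (c * c', u, b, v ++ v')] => z.
by case: b {IH}; rewrite /= !fa_coef_cons !fa_coef_nil -!catA /= ?mulNr.
Qed.

Lemma rel_ideal_mul_relator r x : I (fa_mul x (relator_term r)).
Proof.
case: r => [[[c u] b] v]; elim: x => [|[c' v'] x IH]; first by apply: rel_ideal0.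
rewrite fa_mul_cons; apply: rel_ideal_cat => //; exists [:: (c' * c, v' ++ u, b, v)] => z.
by case: b {IH}; rewrite /= !fa_coef_cons !fa_coef_nil -!catA /= ?mulrN.
Qed.

Lemma rel_ideal_mulr x y : I x -> I (fa_mul x y).
Proof.
move=> [s hs]; apply: rel_ideal_coef_eq (fa_mul_coef_eq (fsym hs) (frefl _)) _.
elim: s {hs} => [|r s IH] /=; first by apply: rel_ideal0.
by rewrite fa_mul_catl; apply: rel_ideal_cat => //; apply: rel_ideal_relator_mul.
Qed.

Lemma rel_ideal_mull x y : I x -> I (fa_mul y x).
Proof.
move=> [s hs]; apply: rel_ideal_coef_eq (fa_mul_coef_eq (frefl _) (fsym hs)) _.
elim: s {hs} => [|r s IH] /=; first exact: rel_ideal0 (fa_mulr0 y).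
apply: rel_ideal_coef_eq (fsym (fa_mul_catr _ _ _)) _.
by apply: rel_ideal_cat => //; apply: rel_ideal_mul_relator.
Qed.

Lemma E_eq_coef_eq x y : coef x =1 coef y -> E_eq x y.
Proof.
by move=> exy; apply: rel_ideal0 => z; rewrite fa_coef_cat fa_coef_opp exy subrr fa_coef_nil.
Qed.

Lemma E_eq_refl x : E_eq x x.
Proof. exact: E_eq_coef_eq. Qed.

Lemma E_eq_sym x y : E_eq x y -> E_eq y x.
Proof.
move=> Exy; apply: rel_ideal_coef_eq (rel_ideal_opp Exy) => z.
by rewrite fa_coef_opp !fa_coef_cat !fa_coef_opp opprD opprK addrC.
Qed.

Lemma E_eq_trans x y e : E_eq x y -> E_eq y e -> E_eq x e.
Proof.
move=> Exy Eye; apply: rel_ideal_coef_eq (rel_ideal_cat Exy Eye) => z.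
by rewrite !fa_coef_cat !fa_coef_opp; ring.
Qed.

Lemma E_eq_cat x x' y y' : E_eq x x' -> E_eq y y' -> E_eq (x ++ y) (x' ++ y').
Proof.
move=> Ex Ey; apply: rel_ideal_coef_eq (rel_ideal_cat Ex Ey) => z.
by rewrite !fa_coef_cat !fa_coef_opp !fa_coef_cat; ring.
Qed.

Lemma E_eq_scale c x y : E_eq x y -> E_eq (fa_scale c x) (fa_scale c y).
Proof.
move=> Exy; apply: rel_ideal_coef_eq (rel_ideal_scale c Exy) => z.
by rewrite !fa_coef_scale !fa_coef_cat !fa_coef_opp !fa_coef_scale; ring.
Qed.

Lemma E_eq_mulr x x' y : E_eq x x' -> E_eq (fa_mul x y) (fa_mul x' y).
Proof.
move=> Ex; apply: rel_ideal_coef_eq (rel_ideal_mulr y Ex) => z.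
rewrite fa_coef_cat fa_coef_opp !fa_coef_mul -sumrB; apply: eq_bigr => i _.
by rewrite fa_coef_cat fa_coef_opp; ring.
Qed.

Lemma E_eq_mull x y y' : E_eq y y' -> E_eq (fa_mul x y) (fa_mul x y').
Proof.
move=> Ey; apply: rel_ideal_coef_eq (rel_ideal_mull x Ey) => z.
rewrite fa_coef_cat fa_coef_opp !fa_coef_mul -sumrB; apply: eq_bigr => i _.
by rewrite fa_coef_cat fa_coef_opp; ring.
Qed.

(** * The representation phi *)

Lemma phi_nil : phi [::] = 0 :> M2.
Proof. by rewrite /phi big_nil. Qed.

Lemma phi_cons a x : phi (a :: x) = sc a.1 * pw a.2 + phi x.
Proof. by rewrite /phi big_cons. Qed.

Lemma phi_cat x y : phi (x ++ y) = phi x + phi y.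
Proof. by rewrite /phi big_cat. Qed.

Lemma phi_word_nil : pw [::] = 1.
Proof. by rewrite /phi_word big_nil. Qed.

Lemma phi_word_cons b u : pw (b :: u) = (if b then Tmat k else Wmat k) * pw u.
Proof. by rewrite /phi_word big_cons. Qed.

Lemma phi_word_cat u v : pw (u ++ v) = pw u * pw v.
Proof. by rewrite /phi_word big_cat. Qed.

Lemma phi_opp x : phi (fa_opp x) = - phi x.
Proof. by rewrite /phi big_map -sumrN; apply: eq_bigr => a _; rewrite !raddfN mulNr. Qed.

Lemma phi_scale c x : phi (fa_scale c x) = sc c * phi x.
Proof.
rewrite /phi big_map mulr_sumr; apply: eq_bigr => a _ /=.
by rewrite polyCM scalar_mxM mulrA.
Qed.

Lemma phi_mul x y : phi (fa_mul x y) = phi x * phi y.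
Proof.
rewrite /phi /fa_mul big_allpairs_dep mulr_suml; apply: eq_bigr => a _.
rewrite mulr_sumr; apply: eq_bigr => b _ /=.
rewrite polyCM scalar_mxM phi_word_cat -!mulrA; congr (_ * _); rewrite !mulrA; congr (_ * _).
by rewrite -!mulmxE scalar_mxC.
Qed.

Lemma phi_coef_expand x s : uniq s -> {subset map snd x <= s} ->
  phi x = \sum_(u <- s) sc (coef x u) * pw u.
Proof.
move=> uniq_s sub_xs; rewrite /phi.
transitivity (\sum_(a <- x) \sum_(u <- s | a.2 == u) sc a.1 * pw u).
  apply: eq_big_seq => a ax; rewrite -big_filter.
  have -> : [seq u <- s | a.2 == u] = [:: a.2].
    rewrite -(filter_pred1_uniq uniq_s (sub_xs _ (map_f _ ax))).
    by apply: eq_filter => u; rewrite eq_sym.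
  by rewrite big_seq1.
rewrite (exchange_big_dep xpredT) //=; apply: eq_bigr => u _.
by rewrite /fa_coef !raddf_sum mulr_suml.
Qed.

Lemma phi_coef_eq x y : coef x =1 coef y -> phi x = phi y.
Proof.
move=> exy; set s := undup (map snd (x ++ y)).
have sub_s e : {subset map snd e <= map snd (x ++ y)} -> {subset map snd e <= s}.
  by move=> sub u /sub; rewrite mem_undup.
rewrite !(@phi_coef_expand _ s) ?undup_uniq //; last 2 first.
- by apply: sub_s => u; rewrite map_cat mem_cat => ->; rewrite orbT.
- by apply: sub_s => u; rewrite map_cat mem_cat => ->.
by apply: eq_bigr => u _; rewrite exy.
Qed.

Lemma Tmat_sqr : Tmat k * Tmat k = - Tmat k.
Proof.
apply/matrixP => i j; rewrite -mulmxE !mxE !big_ord_recl big_ord0 !mxE /=.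
by case: i => [[|[|i]] ?] //=; case: j => [[|[|j]] ?] //=; ring.
Qed.

Lemma Wmat_sqr : Wmat k * Wmat k = 1.
Proof.
apply/matrixP => i j; rewrite -mulmxE !mxE !big_ord_recl big_ord0 !mxE /=.
by case: i => [[|[|i]] ?] //=; case: j => [[|[|j]] ?] //=; ring.
Qed.

Lemma phi_relator_term r : phi (relator_term r) = 0.
Proof.
case: r => [[[c u] [|]] v]; rewrite /= !phi_cons phi_nil addr0 /= !phi_word_cat !phi_word_cons.
  by rewrite [Tmat k * _]mulrA Tmat_sqr mulNr !mulrN addNr.
by rewrite [Wmat k * _]mulrA Wmat_sqr mul1r !raddfN mulNr addrN.
Qed.

Lemma phi_E_eq x y : E_eq x y -> phi x = phi y.
Proof.
move=> [s /phi_coef_eq]; have -> : phi (flatten (map (@relator_term k) s)) = 0.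
  by elim: s => [|q s IH] /=; rewrite ?phi_nil // phi_cat phi_relator_term add0r.
by rewrite /fa_sub phi_cat phi_opp => /eqP; rewrite subr_eq0 => /eqP.
Qed.

Lemma Xsqr_sub1_neq0 : 'X ^+ 2 - 1 != 0 :> {poly k}.
Proof. by rewrite -polyC1 monic_neq0 // monicXnsubC. Qed.

Lemma commute_Tmat_Wmat_scalar (M : M2) :
  Tmat k * M = M * Tmat k -> Wmat k * M = M * Wmat k -> M = (M i0 i0)%:M.
Proof.
move=> cTM cWM.
have /eqP := congr1 (fun A : M2 => A i0 i1) cTM.
have /eqP := congr1 (fun A : M2 => A i1 i0) cTM.
have := congr1 (fun A : M2 => A i0 i1) cWM.
rewrite /= -!mulmxE !mulmx2E !mxE /= !(mul0r, mulr0, add0r, addr0, mulN1r, mulrN1).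
move=> cW01 /eqP cT10 /eqP cT01.
have M01 : M i0 i1 = 0 by apply/eqP; rewrite -oppr_eq0 -cT01.
have M10 : M i1 i0 = 0 by apply/eqP; rewrite -oppr_eq0 cT10.
have M11 : M i1 i1 = M i0 i0.
  by move: cW01; rewrite M01 mulr0 mul0r add0r addr0 mulrC => /(mulIf Xsqr_sub1_neq0).
apply/matrixP => i j; rewrite mxE.
by have [->|->] := ord2P i; have [->|->] := ord2P j; rewrite ?M01 ?M10 ?M11.
Qed.

(** * E is spanned by 1, t, tw, wt over k[zeta] *)

Definition fa_word u : fa := [:: (1, u)].
Definition fa_one := fa_word [::].
Definition fa_t := fa_word [:: true].
Definition fa_w := fa_word [:: false].
Definition fa_tw := fa_word [:: true; false].
Definition fa_wt := fa_word [:: false; true].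

(* The central element zeta = w + wt + tw, which phi sends to X.  It is locked so
   that rewriting does not see [fa_mul zeta e] as a concatenation. *)
Definition zeta : fa := locked (fa_w ++ fa_wt ++ fa_tw).

Definition zeta_pow i e := iter i (fa_mul zeta) e.

Definition zeta_poly_mul p e : fa :=
  flatten [seq fa_scale p`_i (zeta_pow i e) | i <- iota 0 (size p)].

Definition zeta_comb a1 a2 a3 a4 : fa :=
  zeta_poly_mul a1 fa_one ++ zeta_poly_mul a2 fa_t ++
  zeta_poly_mul a3 fa_tw ++ zeta_poly_mul a4 fa_wt.

(* Exhibit the combination of relators; all words involved have length at most 4,
   so the coefficients are compared word by word. *)
Tactic Notation "E_eq_by_relators" uconstr(s) :=
  exists s => -[|[] [|[] [|[] [|[] [|? ?]]]]];
  rewrite /zeta -?lock /fa_sub /fa_opp /= !fa_coef_cons fa_coef_nil /=; ring.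

Lemma zeta_commute_t : E_eq (fa_mul fa_t zeta) (fa_mul zeta fa_t).
Proof. by E_eq_by_relators [:: (1, [::], true, [:: false]); (-1, [:: false], true, [::])]. Qed.

Lemma zeta_commute_w : E_eq (fa_mul fa_w zeta) (fa_mul zeta fa_w).
Proof. by E_eq_by_relators [:: (1, [::], false, [:: true]); (-1, [:: true], false, [::])]. Qed.

Lemma mul_t_one : E_eq (fa_mul fa_t fa_one) fa_t.
Proof. by E_eq_by_relators [::]. Qed.

Lemma mul_t_t : E_eq (fa_mul fa_t fa_t) (fa_opp fa_t).
Proof. by E_eq_by_relators [:: (1, [::], true, [::])]. Qed.

Lemma mul_t_tw : E_eq (fa_mul fa_t fa_tw) (fa_opp fa_tw).
Proof. by E_eq_by_relators [:: (1, [::], true, [:: false])]. Qed.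

Lemma mul_t_wt : E_eq (fa_mul fa_t fa_wt) (fa_mul zeta fa_t).
Proof. by E_eq_by_relators [:: (-1, [:: false], true, [::])]. Qed.

Lemma mul_w_one :
  E_eq (fa_mul fa_w fa_one) (fa_mul zeta fa_one ++ fa_opp fa_wt ++ fa_opp fa_tw).
Proof. by E_eq_by_relators [::]. Qed.

Lemma mul_w_t : E_eq (fa_mul fa_w fa_t) fa_wt.
Proof. by E_eq_by_relators [::]. Qed.

Lemma mul_w_tw : E_eq (fa_mul fa_w fa_tw)
  (fa_mul zeta (fa_mul zeta fa_one) ++ fa_opp (fa_mul zeta fa_wt) ++
   fa_opp (fa_mul zeta fa_tw) ++ fa_opp fa_one ++ fa_opp fa_t).
Proof. by E_eq_by_relators [:: (-1, [::], false, [::]); (-1, [:: true], false, [::])]. Qed.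

Lemma mul_w_wt : E_eq (fa_mul fa_w fa_wt) fa_t.
Proof. by E_eq_by_relators [:: (1, [::], false, [:: true])]. Qed.

Lemma E_eq_zeta_pow i e e' : E_eq e e' -> E_eq (zeta_pow i e) (zeta_pow i e').
Proof. by elim: i => [|i IH] //= Ee; apply: E_eq_mull; apply: IH. Qed.

Lemma zeta_pow_cat i e1 e2 : coef (zeta_pow i (e1 ++ e2)) =1 coef (zeta_pow i e1 ++ zeta_pow i e2).
Proof. by elim: i => [|i IH] //=; apply: ftrans (fa_mul_catr _ _ _); apply: fa_mul_coef_eq. Qed.

Lemma zeta_pow_opp i e : coef (zeta_pow i (fa_opp e)) =1 coef (fa_opp (zeta_pow i e)).
Proof. by elim: i => [|i IH] //=; apply: ftrans (fa_mulrN _ _); apply: fa_mul_coef_eq. Qed.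

Lemma zeta_pow_commute g i e : E_eq (fa_mul g zeta) (fa_mul zeta g) ->
  E_eq (fa_mul g (zeta_pow i e)) (zeta_pow i (fa_mul g e)).
Proof.
move=> cg; elim: i => [|i IH] /=; first exact: E_eq_refl.
rewrite -fa_mulA; apply: E_eq_trans (E_eq_mulr _ cg) _.
by rewrite fa_mulA; apply: E_eq_mull.
Qed.

Lemma zeta_poly_mul_coef p e z :
  coef (zeta_poly_mul p e) z = \sum_(i <- iota 0 (size p)) p`_i * coef (zeta_pow i e) z.
Proof. by rewrite fa_coef_flatten; apply: eq_bigr => i _; rewrite fa_coef_scale. Qed.

Lemma zeta_poly_mul_coef_leq n p e z : (size p <= n)%N ->
  coef (zeta_poly_mul p e) z = \sum_(i <- iota 0 n) p`_i * coef (zeta_pow i e) z.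
Proof.
move=> le_p_n; rewrite zeta_poly_mul_coef -(subnKC le_p_n) iotaD big_cat /=.
rewrite [X in _ = _ + X]big1_seq ?addr0 // => i; rewrite mem_iota => /andP [_ /andP [le_p_i _]].
by rewrite nth_default ?mul0r.
Qed.

Lemma zeta_poly_mul_coefD p q e z :
  coef (zeta_poly_mul (p + q) e) z = coef (zeta_poly_mul p e) z + coef (zeta_poly_mul q e) z.
Proof.
rewrite !(@zeta_poly_mul_coef_leq (maxn (size p) (size q))) ?leq_maxl ?leq_maxr ?size_polyD //.
by rewrite -big_split; apply: eq_bigr => i _; rewrite coefD mulrDl.
Qed.

Lemma zeta_poly_mul_coefN p e z :
  coef (zeta_poly_mul (- p) e) z = - coef (zeta_poly_mul p e) z.
Proof.
by rewrite !zeta_poly_mul_coef size_polyN -sumrN; apply: eq_bigr => i _; rewrite coefN mulNr.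
Qed.

Lemma zeta_poly_mul_coefZ c p e z :
  coef (zeta_poly_mul (c%:P * p) e) z = c * coef (zeta_poly_mul p e) z.
Proof.
rewrite (@zeta_poly_mul_coef_leq (size p)) ?mul_polyC ?size_scale_leq //.
by rewrite zeta_poly_mul_coef mulr_sumr; apply: eq_bigr => i _; rewrite coefZ mulrA.
Qed.

Lemma zeta_poly_mul_coef0 e z : coef (zeta_poly_mul 0 e) z = 0.
Proof. by rewrite zeta_poly_mul_coef size_poly0 big_nil. Qed.

Lemma zeta_poly_mul_coef_zeta p e z :
  coef (zeta_poly_mul p (fa_mul zeta e)) z = coef (zeta_poly_mul ('X * p) e) z.
Proof.
have le_Xp : (size ('X * p)%R <= (size p).+1)%N.
  by have [->|nz_p] := eqVneq p 0; rewrite ?mulr0 ?size_poly0 // mulrC size_mulX.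
rewrite zeta_poly_mul_coef (zeta_poly_mul_coef_leq _ _ le_Xp) /= big_cons coefXM mul0r add0r.
rewrite -[1%N]addn0 iotaDl big_map; apply: eq_bigr => i _.
by rewrite coefXM add1n /zeta_pow -iterSr.
Qed.

Lemma zeta_poly_mul_coef_cat p e1 e2 z :
  coef (zeta_poly_mul p (e1 ++ e2)) z = coef (zeta_poly_mul p e1) z + coef (zeta_poly_mul p e2) z.
Proof.
rewrite !zeta_poly_mul_coef -big_split; apply: eq_bigr => i _.
by rewrite zeta_pow_cat fa_coef_cat mulrDr.
Qed.

Lemma zeta_poly_mul_coef_opp p e z :
  coef (zeta_poly_mul p (fa_opp e)) z = - coef (zeta_poly_mul p e) z.
Proof.
rewrite !zeta_poly_mul_coef -sumrN; apply: eq_bigr => i _.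
by rewrite zeta_pow_opp fa_coef_opp mulrN.
Qed.

Lemma E_eq_zeta_poly_mul p e e' : E_eq e e' -> E_eq (zeta_poly_mul p e) (zeta_poly_mul p e').
Proof.
move=> Ee; rewrite /zeta_poly_mul; elim: (iota 0 _) => [|i s IH] /=; first exact: E_eq_refl.
by apply: E_eq_cat => //; apply: E_eq_scale; apply: E_eq_zeta_pow.
Qed.

Lemma zeta_poly_mul_commute g p e : E_eq (fa_mul g zeta) (fa_mul zeta g) ->
  E_eq (fa_mul g (zeta_poly_mul p e)) (zeta_poly_mul p (fa_mul g e)).
Proof.
move=> cg; rewrite /zeta_poly_mul; elim: (iota 0 _) => [|i s IH] /=.
  exact: E_eq_coef_eq (fa_mulr0 g).
apply: E_eq_trans (E_eq_coef_eq (fa_mul_catr _ _ _)) _; apply: E_eq_cat => //.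
apply: E_eq_trans (E_eq_coef_eq (fa_mulrZ _ _ _)) _.
by apply: E_eq_scale; apply: zeta_pow_commute.
Qed.

Lemma mul_zeta_comb g e1 e2 e3 e4 a1 a2 a3 a4 :
  E_eq (fa_mul g zeta) (fa_mul zeta g) ->
  E_eq (fa_mul g fa_one) e1 -> E_eq (fa_mul g fa_t) e2 ->
  E_eq (fa_mul g fa_tw) e3 -> E_eq (fa_mul g fa_wt) e4 ->
  E_eq (fa_mul g (zeta_comb a1 a2 a3 a4))
    (zeta_poly_mul a1 e1 ++ zeta_poly_mul a2 e2 ++ zeta_poly_mul a3 e3 ++ zeta_poly_mul a4 e4).
Proof.
move=> cg E1 E2 E3 E4.
have Eg p e e' : E_eq (fa_mul g e) e' -> E_eq (fa_mul g (zeta_poly_mul p e)) (zeta_poly_mul p e').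
  by move=> Ee; apply: E_eq_trans (zeta_poly_mul_commute p e cg) (E_eq_zeta_poly_mul p Ee).
rewrite /zeta_comb; do 3 (apply: E_eq_trans (E_eq_coef_eq (fa_mul_catr _ _ _)) _;
  apply: E_eq_cat; first exact: Eg).
exact: Eg.
Qed.

Lemma mul_t_zeta_comb a1 a2 a3 a4 :
  E_eq (fa_mul fa_t (zeta_comb a1 a2 a3 a4)) (zeta_comb 0 (a1 - a2 + 'X * a4) (- a3) 0).
Proof.
apply: E_eq_trans (mul_zeta_comb _ _ _ _ zeta_commute_t mul_t_one mul_t_t mul_t_tw mul_t_wt) _.
apply: E_eq_coef_eq => z; rewrite /zeta_comb !fa_coef_cat !zeta_poly_mul_coef_opp.
rewrite !zeta_poly_mul_coef_zeta !zeta_poly_mul_coefD !zeta_poly_mul_coefN !zeta_poly_mul_coef0.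
ring.
Qed.

Lemma mul_w_zeta_comb a1 a2 a3 a4 :
  E_eq (fa_mul fa_w (zeta_comb a1 a2 a3 a4))
    (zeta_comb ('X * a1 + 'X * ('X * a3) - a3) (a4 - a3) (- a1 - 'X * a3) (a2 - a1 - 'X * a3)).
Proof.
apply: E_eq_trans (mul_zeta_comb _ _ _ _ zeta_commute_w mul_w_one mul_w_t mul_w_tw mul_w_wt) _.
apply: E_eq_coef_eq => z; rewrite /zeta_comb !fa_coef_cat !zeta_poly_mul_coef_cat.
rewrite !zeta_poly_mul_coef_opp !zeta_poly_mul_coef_zeta !zeta_poly_mul_coefD !zeta_poly_mul_coefN.
ring.
Qed.

Lemma zeta_comb_add a1 a2 a3 a4 b1 b2 b3 b4 :
  coef (zeta_comb a1 a2 a3 a4 ++ zeta_comb b1 b2 b3 b4) =1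
  coef (zeta_comb (a1 + b1) (a2 + b2) (a3 + b3) (a4 + b4)).
Proof. by move=> z; rewrite /zeta_comb !fa_coef_cat !zeta_poly_mul_coefD; ring. Qed.

Lemma zeta_comb_scale c a1 a2 a3 a4 :
  coef (fa_scale c (zeta_comb a1 a2 a3 a4)) =1
  coef (zeta_comb (c%:P * a1) (c%:P * a2) (c%:P * a3) (c%:P * a4)).
Proof. by move=> z; rewrite fa_coef_scale /zeta_comb !fa_coef_cat !zeta_poly_mul_coefZ; ring. Qed.

Lemma word_zeta_span u : exists a1 a2 a3 a4, E_eq (fa_word u) (zeta_comb a1 a2 a3 a4).
Proof.
elim: u => [|b u [a1 [a2 [a3 [a4 IH]]]]].
  exists 1, 0, 0, 0; apply: E_eq_coef_eq => z.
  rewrite /zeta_comb !fa_coef_cat !zeta_poly_mul_coef0 zeta_poly_mul_coef size_poly1.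
  by rewrite big_cons big_nil coef1 /=; ring.
have Eb : E_eq (fa_word (b :: u)) (fa_mul (fa_word [:: b]) (zeta_comb a1 a2 a3 a4)).
  apply: E_eq_trans (E_eq_mull _ IH); apply: E_eq_coef_eq => z.
  by rewrite /fa_mul /= !fa_coef_cons fa_coef_nil mul1r.
by case: b Eb => Eb; do 4 eexists;
  [exact: E_eq_trans Eb (mul_t_zeta_comb _ _ _ _) | exact: E_eq_trans Eb (mul_w_zeta_comb _ _ _ _)].
Qed.

Lemma fa_zeta_span x : exists a1 a2 a3 a4, E_eq x (zeta_comb a1 a2 a3 a4).
Proof.
elim: x => [|[c u] x [b1 [b2 [b3 [b4 IH]]]]].
  exists 0, 0, 0, 0; apply: E_eq_coef_eq => z.
  by rewrite /zeta_comb !fa_coef_cat !zeta_poly_mul_coef0 fa_coef_nil; ring.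
have [a1 [a2 [a3 [a4 Eu]]]] := word_zeta_span u.
do 4 eexists; apply: E_eq_trans _ (E_eq_coef_eq (zeta_comb_add _ _ _ _ _ _ _ _)).
apply: E_eq_trans _ (E_eq_cat (E_eq_coef_eq (zeta_comb_scale c _ _ _ _)) IH).
apply: E_eq_trans _ (E_eq_cat (E_eq_scale c Eu) (E_eq_refl x)).
by apply: E_eq_coef_eq => z; rewrite /= !fa_coef_cons /= mulr1.
Qed.

(** * Injectivity and the centre *)

Lemma phi_fa_word u : phi (fa_word u) = pw u.
Proof. by rewrite phi_cons phi_nil addr0 mul1r. Qed.

Lemma phi_zeta : phi zeta = 'X%:M.
Proof.
rewrite /zeta -lock !phi_cat !phi_fa_word !phi_word_cons phi_word_nil !mulr1.
apply/matrixP => i j; rewrite !mxE !big_ord_recl !big_ord0 !mxE.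
by have [->|->] := ord2P i; have [->|->] := ord2P j; rewrite /= ?mulr1n ?mulr0n; ring.
Qed.

Lemma phi_zeta_pow i e : phi (zeta_pow i e) = ('X ^+ i)%:M * phi e.
Proof.
elim: i => [|i IH] /=; first by rewrite expr0 mul1r.
by rewrite phi_mul phi_zeta IH mulrA -rmorphM exprS.
Qed.

Lemma phi_zeta_poly_mul p e : phi (zeta_poly_mul p e) = p%:M * phi e.
Proof.
have phi_flatten (T : Type) (f : T -> fa) s : phi (flatten (map f s)) = \sum_(i <- s) phi (f i).
  by elim: s => [|a s IH] /=; rewrite ?big_nil ?phi_nil // big_cons phi_cat IH.
rewrite phi_flatten.
under eq_bigr => i _ do rewrite phi_scale phi_zeta_pow mulrA -rmorphM /= mul_polyC.
rewrite -mulr_suml -raddf_sum.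
have := @big_mkord _ 0 +%R (size p) xpredT (fun i => p`_i *: 'X^i).
by rewrite /index_iota subn0 => ->; rewrite -poly_def coefK.
Qed.

Lemma phi_zeta_comb a1 a2 a3 a4 :
  let M := phi (zeta_comb a1 a2 a3 a4) in
  [/\ M i0 i0 = a1, M i1 i0 = a3, M i0 i1 = - (('X ^+ 2 - 1) * a4)
     & M i1 i1 = a1 - a2 + 'X * a3 + 'X * a4].
Proof.
rewrite /zeta_comb !phi_cat !phi_zeta_poly_mul /fa_one /fa_t /fa_tw /fa_wt !phi_fa_word.
rewrite !phi_word_cons phi_word_nil !mulr1 -!mulmxE !mul_scalar_mx.
by split; rewrite !mxE !big_ord_recl !big_ord0 !mxE /=; ring.
Qed.

Lemma phi_zeta_comb_inj a1 a2 a3 a4 b1 b2 b3 b4 :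
  phi (zeta_comb a1 a2 a3 a4) = phi (zeta_comb b1 b2 b3 b4) ->
  [/\ a1 = b1, a2 = b2, a3 = b3 & a4 = b4].
Proof.
have [A00 A10 A01 A11] := phi_zeta_comb a1 a2 a3 a4.
have [B00 B10 B01 B11] := phi_zeta_comb b1 b2 b3 b4.
move=> eqAB; have entry i j := congr1 (fun M : M2 => M i j) eqAB.
have e1 : a1 = b1 by rewrite -A00 -B00 entry.
have e3 : a3 = b3 by rewrite -A10 -B10 entry.
have e4 : a4 = b4.
  by apply: (mulfI Xsqr_sub1_neq0); apply: oppr_inj; rewrite -A01 -B01 entry.
split=> //; move: (entry i1 i1) => /=; rewrite A11 B11 e1 e3 e4.
by move/addIr/addIr/addrI/oppr_inj.
Qed.

Lemma phi_inj x y : phi x = phi y -> E_eq x y.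
Proof.
have [a1 [a2 [a3 [a4 Ex]]]] := fa_zeta_span x.
have [b1 [b2 [b3 [b4 Ey]]]] := fa_zeta_span y.
rewrite (phi_E_eq Ex) (phi_E_eq Ey) => /phi_zeta_comb_inj [e1 e2 e3 e4].
by rewrite e1 e2 e3 e4 in Ex; apply: E_eq_trans Ex (E_eq_sym Ey).
Qed.

Lemma phi_central x : E_central x -> exists q, phi x = q%:M.
Proof.
move=> cx; exists (phi x i0 i0).
have phi_gen b : phi (fa_word [:: b]) = if b then Tmat k else Wmat k.
  by rewrite phi_fa_word phi_word_cons phi_word_nil mulr1.
have /esym cT := phi_E_eq (cx fa_t); have /esym cW := phi_E_eq (cx fa_w).
rewrite !phi_mul !phi_gen in cT cW; exact: commute_Tmat_Wmat_scalar cT cW.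
Qed.

Lemma scalar_phi_central q : exists x, E_central x /\ phi x = q%:M.
Proof.
have phi_one : phi fa_one = 1 by rewrite phi_fa_word phi_word_nil.
exists (zeta_poly_mul q fa_one); rewrite phi_zeta_poly_mul phi_one mulr1; split=> // y.
by apply: phi_inj; rewrite !phi_mul phi_zeta_poly_mul phi_one mulr1 -!mulmxE scalar_mxC.
Qed.

End FreeAlgebra.

Theorem proposition3p8 (p : nat) (k : closedFieldType)
  (hp : prime p) (hchar : p \in [pchar k])
  (halg : forall x : k, exists n : nat, (0 < n)%N /\ x ^+ (p ^ n) = x) :
  (forall x y : fa k, E_eq x y -> phi x = phi y) /\
  (forall x y : fa k, phi x = phi y -> E_eq x y) /\
  (forall x : fa k, E_central x -> exists q : {poly k}, phi x = q%:M) /\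
  (forall q : {poly k}, exists x : fa k, E_central x /\ phi x = q%:M).
Proof.
split; first exact: phi_E_eq.
split; first exact: phi_inj.
split; first exact: phi_central.
exact: scalar_phi_central.
Qed.
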